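(* For every integer $d\ge2$, the infinite $d$-regular tree rooted at a vertex $o$ is Hamiltonian: it admits an invariant line ensemble $L$ with $\mathbb P(o\in L)=1$.
   Context: A line ensemble of $G=(V,E)$ is a symmetric $L:V^2\to\{0,1\}$ with $L(u,u)=0$, $L(u,v)=0$ unless $\{u,v\}\in E$, and $\sum_uL(u,v)\in\{0,2\}$ for all $v$; $v\in L$ means $\sum_uL(u,v)=2$. For a unimodular random rooted graph $(G,o)$, an invariant line ensemble is a random line ensemble $L$, defined on an enlarged probability space, such that the weighted rooted graph $(G,L,o)$ is unimodular, i.e. $\mathbb E\sum_vf(G,L,o,v)=\mathbb E\sum_vf(G,L,v,o)$ for all nonnegative measurable $f$ of isomorphism classes of doubly rooted weighted graphs. *)

From HB Require Import structures.
From mathcomp Require Import all_boot all_order all_algebra.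
From mathcomp Require Import all_classical all_reals all_analysis.
From mathcomp Require Import measurable_realfun.

Set Implicit Arguments.
Unset Strict Implicit.
Unset Printing Implicit Defensive.

Import Order.TTheory GRing.Theory Num.Theory.
Local Open Scope classical_set_scope.
Local Open Scope ring_scope.

(* The infinite d-regular tree, realised as the Cayley graph of the free
   product of d copies of Z/2Z: vertices are reduced words over the
   alphabet 'I_d (no two consecutive letters equal); u ~ v iff v = u.a
   for some generator a (right multiplication: append a, or cancel a
   trailing a).  For d >= 2 this is the d-regular tree. *)

Definition reduced (d : nat) (s : seq 'I_d) : bool :=
  sorted (fun a b : 'I_d => a != b) s.

Definition tree_vertex (d : nat) := {s : seq 'I_d | reduced s}.

Definition stepw (d : nat) (w : seq 'I_d) (a : 'I_d) : seq 'I_d :=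
  if (w != [::]) && (last a w == a) then take (size w).-1 w else rcons w a.

Definition tree_adj (d : nat) (u v : tree_vertex d) : bool :=
  [exists a : 'I_d, val v == stepw (val u) a].

Definition tree_root (d : nat) : tree_vertex d :=
  exist (fun s : seq 'I_d => reduced s) [::] isT.

(* Line ensembles of a graph (V, adj), L : V^2 -> {0,1} encoded as bool.
   sum_u L(u,v) in {0,2}: either no u, or exactly two distinct u. *)

Definition vdeg0 (V : Type) (L : V -> V -> bool) (v : V) : Prop :=
  forall u, ~~ L u v.

Definition vdeg2 (V : Type) (L : V -> V -> bool) (v : V) : Prop :=
  exists u1 u2, [/\ u1 <> u2, L u1 v, L u2 v &
                 forall u, L u v -> u = u1 \/ u = u2].

Definition in_line (V : Type) (L : V -> V -> bool) (v : V) : Prop := vdeg2 L v.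

Definition line_ensemble (V : Type) (adj : V -> V -> bool)
  (L : V -> V -> bool) : Prop :=
  [/\ forall u v, L u v = L v u,
      forall u, L u u = false,
      forall u v, L u v -> adj u v &
      forall v, vdeg0 L v \/ vdeg2 L v].

Definition graph_aut (V : Type) (adj : V -> V -> bool) (phi : V -> V) : Prop :=
  bijective phi /\ forall u v, adj (phi u) (phi v) = adj u v.

(* cylinder sigma-algebra on weight functions V -> V -> bool
   (the product sigma-algebra, i.e. the one of the local topology once the
   underlying graph is fixed) *)
Definition cylinders (V : Type) : set (set (V -> V -> bool)) :=
  [set A | exists x y, A = [set l : V -> V -> bool | l x y = true]].

(* Nonnegative measurable functions of isomorphism classes of doubly rooted
   weighted graphs (G, L, u, v), restricted to G = the fixed graph:
   functions f L u v, measurable in L for the cylinder sigma-algebra and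
   invariant under graph automorphisms. *)
Definition iso_invariant_measurable (R : realType) (V : Type)
  (adj : V -> V -> bool) (f : (V -> V -> bool) -> V -> V -> \bar R) : Prop :=
  [/\ forall l u v, (0 <= f l u v)%E,
      forall u v (B : set (\bar R)), measurable (B : set (\bar R)) ->
        <<s @cylinders V >> ((fun l => f l u v) @^-1` B) &
      forall phi, graph_aut adj phi ->
        forall l u v, f (fun x y => l (phi x) (phi y)) u v = f l (phi u) (phi v)].

(* An invariant line ensemble of the (deterministic) rooted graph (V,adj,o)
   on a probability space P: L is a random line ensemble (measurable, a line
   ensemble for every outcome) and (G, L, o) is unimodular (mass transport
   principle). *)
Definition invariant_line_ensemble (R : realType) (V : choiceType)
  (adj : V -> V -> bool) (o : V)
  (dT : measure_display) (T : measurableType dT) (P : probability T R)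
  (L : T -> V -> V -> bool) : Prop :=
  [/\ forall w, line_ensemble adj (L w),
      forall x y, measurable [set w | L w x y] &
      forall f, iso_invariant_measurable adj f ->
        (\int[P]_w (\esum_(v in [set: V]) f (L w) o v))%E =
        (\int[P]_w (\esum_(v in [set: V]) f (L w) v o))%E].

(** The d-regular tree is the Cayley graph of the free product of d copies
    of Z/2Z, so left translations act on it by automorphisms, transitively.
    Keeping exactly the edges labelled by two fixed generators gives a
    deterministic line ensemble through every vertex (the labels alternate
    along each line) which is invariant under all left translations.  The
    mass transport principle then holds by moving the pair (o, v) to
    (v^-1, o) with the translation by v^-1 and reindexing by inversion. *)
From HB Require Import structures.
From mathcomp Require Import all_boot all_order all_algebra.
From mathcomp Require Import all_classical all_reals all_analysis.
From mathcomp Require Import measurable_realfun.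
From mathcomp Require Import zify.

Set Implicit Arguments.
Unset Strict Implicit.
Unset Printing Implicit Defensive.

Local Open Scope classical_set_scope.
Local Open Scope ring_scope.

Section ReducedWords.
Variable d : nat.
Implicit Types (x y g h w : seq 'I_d) (a b : 'I_d).

Lemma reduced_rcons y b :
  reduced (rcons y b) = reduced y && ((y == [::]) || (last b y != b)).
Proof. by case: y => [|h t] //=; rewrite /reduced /= rcons_path. Qed.

Lemma stepw_rcons y b a :
  stepw (rcons y b) a = if b == a then y else rcons (rcons y b) a.
Proof.
rewrite /stepw last_rcons; case: (b == a); last by rewrite andbF.
by rewrite andbT size_rcons /= -cats1 take_size_cat; case: y.
Qed.

Lemma stepw_reduced x a : reduced x -> reduced (stepw x a).
Proof.
case/lastP: x => [|y b] //; rewrite stepw_rcons => red_yb.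
case: (b =P a) => [_|/eqP nba]; first by move: red_yb; rewrite reduced_rcons => /andP[].
by rewrite reduced_rcons red_yb last_rcons nba orbT.
Qed.

Lemma stepwK x a : reduced x -> stepw (stepw x a) a = x.
Proof.
case/lastP: x => [|y b]; first by rewrite /stepw /= eqxx.
rewrite reduced_rcons => /andP[_ red_last]; rewrite stepw_rcons.
case: (b =P a) => [eba|_]; last by rewrite stepw_rcons eqxx.
subst b; case/lastP: y red_last => [|z c] //; rewrite last_rcons stepw_rcons.
by case: (c =P a) => [->|//]; rewrite /= orbF; case: z.
Qed.

Lemma stepw_neq x a : stepw x a != x.
Proof.
apply/eqP; case/lastP: x => [|y b] //; rewrite stepw_rcons.
by case: (b =P a) => _ /(congr1 size); rewrite !size_rcons; lia.
Qed.

Lemma stepw_inj x : injective (stepw x).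
Proof.
move=> a b; case/lastP: x => [|y c]; first by move=> -[].
rewrite !stepw_rcons.
case: (c =P a) => [<-|_]; case: (c =P b) => [<-|_] // E.
- by move/(congr1 size): E; rewrite !size_rcons; lia.
- by move/(congr1 size): E; rewrite !size_rcons; lia.
- by move/rcons_inj: E => [].
Qed.

Definition mulw g w := foldl (@stepw d) g w.

Lemma mulw_reduced g w : reduced g -> reduced (mulw g w).
Proof. by elim: w g => [|a w IH] g //= red_g; apply/IH/stepw_reduced. Qed.

Lemma mulw_stepw h w a : reduced h -> mulw h (stepw w a) = stepw (mulw h w) a.
Proof.
move=> red_h; case/lastP: w => [|y b] //.
rewrite stepw_rcons /mulw foldl_rcons.
case: (b =P a) => [->|_]; last by rewrite !foldl_rcons.
by rewrite stepwK //; apply: mulw_reduced.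
Qed.

Lemma mulwA h g w : reduced h -> mulw h (mulw g w) = mulw (mulw h g) w.
Proof.
move=> red_h; elim: w g => [|a w IH] g //=.
by rewrite /mulw /= -/(mulw _ _) IH -/(mulw _ _) mulw_stepw.
Qed.

Lemma rev_reduced g : reduced g -> reduced (rev g).
Proof.
rewrite /reduced rev_sorted; case: g => [|a g] //=.
by rewrite (@eq_path _ _ (fun a b : 'I_d => a != b)) // => x y; rewrite eq_sym.
Qed.

Lemma mulVw g : reduced g -> mulw (rev g) g = [::].
Proof.
elim: g => [|a g IH] //= red_ag.
rewrite /mulw /= rev_cons stepw_rcons eqxx -/(mulw _ _).
by apply: IH; move: red_ag; rewrite /reduced /=; exact: path_sorted.
Qed.

Lemma mulw_cat x w : reduced (x ++ w) -> mulw x w = x ++ w.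
Proof.
elim: w x => [|a w IH] x; first by rewrite cats0.
move=> red_xaw; rewrite /mulw /= -/(mulw _ _).
have -> : stepw x a = rcons x a.
  case: x red_xaw => [|h t] // red_xaw.
  move: red_xaw; rewrite /reduced /= cat_path /= => /and3P[_ nla _].
  by rewrite /stepw /= (negbTE nla).
by rewrite IH cat_rcons.
Qed.

Lemma mul1w w : reduced w -> mulw [::] w = w.
Proof. by move=> red_w; rewrite mulw_cat. Qed.

End ReducedWords.

Section TreeTranslations.
Variable d : nat.
Local Notation V := (tree_vertex d).
Implicit Types (u v g : V) (S : pred 'I_d).

Definition stepV v (a : 'I_d) : V := exist (@reduced d) _ (stepw_reduced a (valP v)).
Definition translate g v : V := exist (@reduced d) _ (mulw_reduced (val v) (valP g)).
Definition invV g : V := exist (@reduced d) _ (rev_reduced (valP g)).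

Lemma invVK : involutive invV.
Proof. by move=> g; apply: val_inj; rewrite /= revK. Qed.

Lemma translateK g : cancel (translate g) (translate (invV g)).
Proof.
move=> v; apply: val_inj => /=.
by rewrite mulwA ?mulVw ?mul1w ?rev_reduced //; apply: valP.
Qed.

Lemma translate_bij g : bijective (translate g).
Proof.
exists (translate (invV g)); first exact: translateK.
by move=> v; have := translateK (invV g) v; rewrite invVK.
Qed.

Lemma translate_root g : translate g (tree_root d) = g.
Proof. by apply: val_inj. Qed.

Lemma translateVv g : translate (invV g) g = tree_root d.
Proof. by apply: val_inj; rewrite /= mulVw //; apply: valP. Qed.

Definition label_edge S u v := [exists a, S a && (val v == stepw (val u) a)].

Lemma tree_adjE : tree_adj (d := d) =2 label_edge predT.
Proof. by move=> u v; apply: eq_existsb. Qed.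

Lemma label_edgeC S u v : label_edge S u v = label_edge S v u.
Proof.
apply: eq_existsb => a; congr (_ && _).
by apply/eqP/eqP => ->; rewrite stepwK //; apply: valP.
Qed.

Lemma label_edge_translate S g u v :
  label_edge S (translate g u) (translate g v) = label_edge S u v.
Proof.
suff edgeT h x y : label_edge S x y -> label_edge S (translate h x) (translate h y).
  apply/idP/idP => [/(edgeT (invV g))|]; last exact: edgeT.
  by rewrite !translateK.
case/existsP=> a /andP[Sa /eqP Eyx]; apply/existsP; exists a.
by rewrite Sa /= Eyx mulw_stepw //; apply: valP.
Qed.

Lemma translate_aut g : graph_aut (@tree_adj d) (translate g).
Proof.
by split=> [|u v]; [exact: translate_bij | rewrite !tree_adjE label_edge_translate].
Qed.

Lemma label_edge2_deg2 (a b : 'I_d) v : a != b -> vdeg2 (label_edge (pred2 a b)) v.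
Proof.
move=> nab; exists (stepV v a), (stepV v b); split.
- by move/(congr1 val)/stepw_inj/eqP; rewrite (negbTE nab).
- by rewrite label_edgeC; apply/existsP; exists a; rewrite /= !eqxx.
- by rewrite label_edgeC; apply/existsP; exists b; rewrite /= !eqxx orbT.
- move=> u; rewrite label_edgeC => /existsP[c /andP[/orP Sc /eqP Euv]].
  have -> : u = stepV v c by apply: val_inj.
  by case: Sc => /eqP->; [left | right].
Qed.

Lemma label_edge2_line (a b : 'I_d) : a != b ->
  line_ensemble (@tree_adj d) (label_edge (pred2 a b)).
Proof.
move=> nab; split=> [u v|u|u v|v]; first exact: label_edgeC.
- by apply/existsP => -[c /andP[_ /eqP Euu]]; move: (stepw_neq (val u) c); rewrite -Euu eqxx.
- by rewrite tree_adjE => /existsP[c /andP[_ E]]; apply/existsP; exists c.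
- by right; exact: label_edge2_deg2.
Qed.

End TreeTranslations.

Section MassTransport.
Variables (R : realType) (V : choiceType) (adj : V -> V -> bool).

(* Invariance under [phi v] turns the transport from [v] to [o] into the
   transport from [o] to [phi v o]; then reindex along [v |-> phi v o]. *)
Lemma mass_transport_transitive (L : V -> V -> bool) (o : V) (phi : V -> V -> V)
    (f : (V -> V -> bool) -> V -> V -> \bar R) :
  iso_invariant_measurable adj f ->
  (forall v, graph_aut adj (phi v)) ->
  (forall v x y, L (phi v x) (phi v y) = L x y) ->
  (forall v, phi v v = o) ->
  bijective (fun v => phi v o) ->
  (\esum_(v in [set: V]) f L o v = \esum_(v in [set: V]) f L v o)%E.
Proof.
move=> [_ _ f_inv] phi_aut L_inv phi_vv phi_o_bij.
transitivity (\esum_(v in [set: V]) f L o (phi v o)); last first.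
  apply: eq_esum => v _; rewrite -{1}(phi_vv v) -f_inv //.
  by congr f; apply/funext => x; apply/funext => y; rewrite L_inv.
rewrite -(reindex_esum [set: V] [set: V] (fun v => phi v o) (f L o)) //.
by rewrite setTT_bijective.
Qed.

Lemma const_invariant_line_ensemble (o : V) (dT : measure_display)
    (T : measurableType dT) (P : probability T R) (L : V -> V -> bool) :
  line_ensemble adj L ->
  (forall f : (V -> V -> bool) -> V -> V -> \bar R, iso_invariant_measurable adj f ->
     (\esum_(v in [set: V]) f L o v = \esum_(v in [set: V]) f L v o)%E) ->
  invariant_line_ensemble adj o P (fun _ => L).
Proof.
move=> L_line L_mtp; split=> // [x y|f /L_mtp mtp]; last by apply: eq_integral => w _.
case: (L x y).
- by rewrite (_ : [set _ | _] = setT) //; apply/seteqP; split.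
- by rewrite (_ : [set _ | _] = set0) //; apply/seteqP; split.
Qed.

End MassTransport.

Theorem lemma5p1 (R : realType) (d : nat) (hd : (2 <= d)%N) :
  exists (dT : measure_display) (T : measurableType dT)
         (P : probability T R) (L : T -> tree_vertex d -> tree_vertex d -> bool),
    invariant_line_ensemble (@tree_adj d) (tree_root d) P L /\
    P [set w | in_line (L w) (tree_root d)] = 1%E.
Proof.
pose a : 'I_d := Ordinal (ltnW hd); pose b : 'I_d := Ordinal hd.
have nab : a != b by [].
pose L := label_edge (pred2 a b).
exists _, R, (@dirac _ R 0 R), (fun _ => L); split.
- apply: const_invariant_line_ensemble; first exact: label_edge2_line.
  move=> f f_inv; apply: (mass_transport_transitive (phi := fun v => translate (invV v))).
  + exact: f_inv.
  + by move=> v; apply: translate_aut.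
  + by move=> v x y; apply: label_edge_translate.
  + by move=> v; apply: translateVv.
  + by exists (@invV d) => v; rewrite /= translate_root invVK.
- rewrite (_ : [set _ | _] = setT) ?probability_setT //.
  by apply/seteqP; split=> // w _; apply: label_edge2_deg2.
Qed.
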